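(* Let $G$ be a $k$-minor-critical graph. Then for every separation $(A,B)$ of $G$, the induced subgraph $G[A\cap B]$ is not a split graph; equivalently, $G[A\cap B]$ contains $C_4$, $C_5$ or $2K_2$ as an induced subgraph.
   Context: A graph $G$ is $k$-minor-critical if $\chi(G)=k$ and $\chi(H)<k$ for every minor $H$ of $G$ other than $G$ itself (a minor being obtained by edge deletions, edge contractions and vertex deletions). A separation of $G$ is a pair $(A,B)$ of subsets of $V(G)$ with $A\cup B=V(G)$, $A\setminus B\neq\emptyset$, $B\setminus A\neq\emptyset$, and no edge with one end in $A\setminus B$ and the other in $B\setminus A$. A split graph is a graph whose vertex set can be partitioned into a clique and an independent set (either possibly empty). *)

From mathcomp Require Import all_boot.
Set Implicit Arguments. Unset Strict Implicit. Unset Printing Implicit Defensive.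

Record sgraph := SGraph {
  vertex :> finType;
  adj : rel vertex;
  adj_sym : symmetric adj;
  adj_irr : irreflexive adj }.

Definition colorable (G : sgraph) (k : nat) : bool :=
  [exists f : {ffun G -> 'I_k}, [forall x, [forall y, adj x y ==> (f x != f y)]]].

Lemma colorable_card (G : sgraph) : colorable G #|G|.
Proof.
apply/existsP; exists [ffun x => enum_rank x].
apply/forallP => x; apply/forallP => y; apply/implyP => hxy.
rewrite !ffunE; apply: contraTneq hxy => /enum_rank_inj ->.
by rewrite adj_irr.
Qed.

Definition chi (G : sgraph) : nat :=
  ex_minn (ex_intro (fun k => colorable G k) _ (colorable_card G)).

Definition isomorphic (H G : sgraph) : Prop :=
  exists f : H -> G, bijective f /\ forall x y, adj (f x) (f y) = adj x y.

Definition connected_in (G : sgraph) (S : {set G}) : Prop :=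
  forall x y, x \in S -> y \in S ->
    connect [rel u v | [&& u \in S, v \in S & adj u v]] x y.

(* H is a minor of G: there is a model of H in G by nonempty, pairwise
   disjoint, connected branch sets, adjacent branch sets for adjacent
   vertices of H (equivalent to obtainability by deletions/contractions). *)
Definition minor (H G : sgraph) : Prop :=
  exists phi : H -> {set G},
    [/\ forall h, phi h != set0,
        forall h, connected_in (phi h),
        forall h h', h != h' -> [disjoint phi h & phi h'] &
        forall h h', adj h h' ->
          exists x y, [/\ x \in phi h, y \in phi h' & adj x y]].

(* k-minor-critical: chi(G) = k and every minor other than G itself
   (i.e. not isomorphic to G) has chromatic number < k. *)
Definition minor_critical (k : nat) (G : sgraph) : Prop :=
  chi G = k /\ forall H : sgraph, minor H G -> ~ isomorphic H G -> chi H < k.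

Definition separation (G : sgraph) (A B : {set G}) : Prop :=
  [/\ A :|: B = setT, A :\: B != set0, B :\: A != set0 &
      forall x y, x \in A :\: B -> y \in B :\: A -> ~~ adj x y].

Definition induced (G : sgraph) (S : {set G}) : sgraph :=
  @SGraph {x : G | x \in S} (fun x y => adj (val x) (val y))
    (fun x y => adj_sym (val x) (val y)) (fun x => adj_irr (val x)).

Definition split_graph (G : sgraph) : Prop :=
  exists C I : {set G},
    [/\ C :|: I = setT, [disjoint C & I],
        (forall x y, x \in C -> y \in C -> x != y -> adj x y) &
        (forall x y, x \in I -> y \in I -> ~~ adj x y)].

From mathcomp Require Import all_boot fingroup perm.
Set Implicit Arguments. Unset Strict Implicit. Unset Printing Implicit Defensive.

(* Let G be k-minor-critical and (A, B) a separation whose middle S = A ∩ B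
   induces a split graph (clique Cs plus independent set Is); we derive a
   (k-1)-colouring of G, a contradiction.

   From the separation we extract a "tight" separator
      T ⊆ S together with two disjoint connected vertex sets D1, D2 missing T
      such that every vertex of T has a neighbour in D1 and in D2 and every
      edge leaving D1 ends in T (take a component D of G - S, its neighbours
      S1 in S, the component D1 of G - S1 on the other side, its neighbours
      T in S1, and the component D2 of G - T containing D).
   2. One side.  For such a side D, contract D together with Is ∩ T into a
      single vertex and delete the rest of D.  This is a proper minor, hence
      (k-1)-colourable, and pulls back to a colouring of G - D in which two
      vertices of T share a colour exactly when both lie in Is.
   3. Gluing.  The two colourings of G - D1 and G - D2 induce the same
      partition of T; after permuting the colours of the second one they agree
      on T and combine into a (k-1)-colouring of G. *)

Definition restr (G : sgraph) (P : {set G}) : rel G :=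
  [rel u v | [&& u \in P, v \in P & adj u v]].

Definition touch (G : sgraph) (X Y : {set G}) : bool :=
  [exists x in X, exists y in Y, adj x y].

(* The component of v in G - X (it is {v} when v lies in X). *)
Definition comp (G : sgraph) (X : {set G}) (v : G) : {set G} :=
  [set u | connect (restr (~: X)) v u].

Definition nbh (G : sgraph) (X D : {set G}) : {set G} :=
  [set x in X | [exists d in D, adj x d]].

Lemma connect_inv (T : finType) (e : rel T) (P : pred T) x y :
  (forall u w, e u w -> P u -> P w) -> P x -> connect e x y -> P y.
Proof.
move=> step Px /connectP [p]; elim: p x Px => [|z p IH] x Px /=; first by move=> _ ->.
by case/andP=> exz pz; apply: IH pz; apply: step exz Px.
Qed.

Lemma restr_sym (G : sgraph) (P : {set G}) : symmetric (restr P).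
Proof. by move=> x y; rewrite /restr /= (adj_sym x y) andbCA. Qed.

Lemma connect_restr_sub (G : sgraph) (P Q : {set G}) x y :
  P \subset Q -> connect (restr P) x y -> connect (restr Q) x y.
Proof.
move=> /subsetP PQ; apply: connect_sub => u w /and3P [uP wP uw].
by apply: connect1; rewrite /restr /= !PQ.
Qed.

Lemma connected_attach (G : sgraph) (X D : {set G}) :
  connected_in D -> (forall x, x \in X -> exists2 d, d \in D & adj x d) ->
  connected_in (X :|: D).
Proof.
move=> Dconn Xatt.
have sub : D \subset X :|: D by apply: subsetUr.
have toD x : x \in X :|: D -> exists2 d, d \in D & connect (restr (X :|: D)) x d.
  case/setUP=> [xX|xD]; last by exists x; rewrite ?connect0.
  have [d dD xd] := Xatt x xX; exists d => //; apply: connect1.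
  by rewrite /restr /= !inE xX dD xd orbT.
move=> x y xXD yXD; have [d dD xd] := toD x xXD; have [d' d'D yd'] := toD y yXD.
apply: connect_trans xd _; apply: connect_trans (connect_restr_sub sub (Dconn d d' dD d'D)) _.
by rewrite (sym_connect_sym (@restr_sym G _)).
Qed.

Section Components.
Variables (G : sgraph) (X : {set G}) (v : G).

Lemma comp_self : v \in comp X v.
Proof. by rewrite inE connect0. Qed.

Lemma comp_inv (P : pred G) :
  (forall u w, u \notin X -> w \notin X -> adj u w -> P u -> P w) -> P v ->
  {subset comp X v <= P}.
Proof.
move=> step Pv u; rewrite inE; apply: connect_inv Pv => x y /and3P [].
by rewrite !inE; apply: step.
Qed.

Hypothesis vX : v \notin X.

Lemma comp_out u : u \in comp X v -> u \notin X.
Proof. by apply: (comp_inv (P := [pred u | u \notin X])). Qed.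

Lemma comp_adj u w : u \in comp X v -> w \notin X -> adj u w -> w \in comp X v.
Proof.
move=> uC wX uw; move: (uC); rewrite !inE => cu; apply: connect_trans cu _.
by apply: connect1; rewrite /restr /= !inE (comp_out uC) wX.
Qed.

Lemma comp_connected : connected_in (comp X v).
Proof.
set C := comp X v.
have fromv u : u \in C -> connect (restr C) v u.
  pose P := [pred u | (u \in C) && connect (restr C) v u].
  have step x y : restr (~: X) x y -> P x -> P y.
    move=> /and3P [_ yX xy] /andP [xC cx]; rewrite inE in yX.
    have yC := comp_adj xC yX xy; rewrite /= yC /=.
    by apply: (connect_trans cx); apply: connect1; rewrite /restr /= xC yC.
  have Pv : P v by rewrite /= comp_self connect0.
  by rewrite inE => /(connect_inv step Pv) /andP [].
move=> x y xC yC; apply: (@connect_trans _ _ v); last exact: fromv.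
by rewrite (sym_connect_sym (@restr_sym G _)) fromv.
Qed.

Lemma comp_boundary u w :
  u \in comp X v -> w \notin comp X v -> adj u w -> w \in nbh X (comp X v).
Proof.
move=> uC wC uw; rewrite inE; case: (boolP (w \in X)) => wX /=.
  by apply/existsP; exists u; rewrite uC adj_sym.
by rewrite (comp_adj uC wX uw) in wC.
Qed.

End Components.

Lemma comp_mono (G : sgraph) (X Y : {set G}) v :
  Y \subset X -> comp X v \subset comp Y v.
Proof.
move=> YX; apply/subsetP => u; rewrite !inE; apply: connect_restr_sub.
by rewrite setCS.
Qed.

Lemma nbh_sub (G : sgraph) (X D : {set G}) : nbh X D \subset X.
Proof. by apply/subsetP => x; rewrite inE => /andP []. Qed.

(* Let C be the component of v in G - X and w a vertex outside X and C.
   Deleting only the attachments of C in X, the component of w still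
   avoids C: its only routes into C would pass through those attachments. *)
Lemma comp_nbh_disjoint (G : sgraph) (X : {set G}) v w :
  v \notin X -> w \notin X -> w \notin comp X v ->
  [disjoint comp (nbh X (comp X v)) w & comp X v].
Proof.
move=> vX wX wC; set Y := nbh X (comp X v).
have wY : w \notin Y by apply: contra wX; apply: (subsetP (nbh_sub _ _)).
rewrite disjoint_subset; apply/subsetP.
apply: (comp_inv (P := [predC comp X v])) => // x y xY yY xy xC.
apply/negP => yC; case: (boolP (x \in X)) => xX.
  by case/negP: xY; rewrite inE xX /=; apply/existsP; exists y; rewrite yC xy.
by move: xC; rewrite inE (comp_adj vX yC xX) // adj_sym.
Qed.

Definition full_side (G : sgraph) (T D : {set G}) : Prop :=
  [/\ D != set0, connected_in D, [disjoint D & T] &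
      forall t, t \in T -> exists2 d, d \in D & adj t d].

Lemma separation_comp (G : sgraph) (A B : {set G}) v :
  separation A B -> v \in B :\: A -> comp (A :&: B) v \subset B :\: A.
Proof.
move=> [AB _ _ nadj] vBA.
have step u w : u \notin A :&: B -> w \notin A :&: B -> adj u w ->
    u \in B :\: A -> w \in B :\: A.
  move=> _ wS uw uBA; have : w \in A :|: B by rewrite AB inE.
  case/setUP => [wA|wB]; last by rewrite inE wB andbT; apply: contra wS => wA; rewrite inE wA.
  have wAB : w \in A :\: B by rewrite inE wA andbT; apply: contra wS => wB; rewrite inE wA.
  by have := nadj w u wAB uBA; rewrite adj_sym uw.
by apply/subsetP => x /(comp_inv (P := [pred u | u \in B :\: A]) step vBA).
Qed.

Lemma separation_full_sides (G : sgraph) (A B : {set G}) :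
  separation A B ->
  exists T D1 D2 : {set G},
    [/\ T \subset A :&: B, full_side T D1, full_side T D2, [disjoint D1 & D2] &
        forall u w, u \in D1 -> w \notin D1 -> adj u w -> w \in T].
Proof.
move=> sep; case: (sep) => _ /set0Pn [a aAB] /set0Pn [b bBA] _.
set S := A :&: B.
have aS : a \notin S by move: aAB; rewrite !inE => /andP [/negbTE -> _]; rewrite andbF.
have bS : b \notin S by move: bBA; rewrite !inE => /andP [/negbTE -> _].
have aD : a \notin comp S b.
  apply: contraL aAB => /(subsetP (separation_comp sep bBA)).
  by rewrite !inE => /andP [/negbTE ->]; rewrite andbF.
set D := comp S b; set S1 := nbh S D; set D1 := comp S1 a.
set T := nbh S1 D1; set D2 := comp T b.
have S1S : S1 \subset S := nbh_sub S D.
have TS1 : T \subset S1 := nbh_sub S1 D1.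
have TS := subset_trans TS1 S1S.
have aS1 : a \notin S1 by apply: contra aS; apply: (subsetP S1S).
have bS1 : b \notin S1 by apply: contra bS; apply: (subsetP S1S).
have bT : b \notin T by apply: contra bS; apply: (subsetP TS).
have bD1 : b \notin D1 by rewrite (disjointFl (comp_nbh_disjoint bS aS aD)) ?comp_self.
have dD2D1 : [disjoint D2 & D1] := comp_nbh_disjoint aS1 bS1 bD1.
exists T, D1, D2; split => //.
- split.
  + by apply/set0Pn; exists a; apply: comp_self.
  + exact: comp_connected.
  + rewrite disjoint_subset; apply/subsetP => u /(comp_out aS1).
    by apply: contra; apply: (subsetP TS1).
  + by move=> t; rewrite inE => /andP [_ /existsP [d /andP [dD1 td]]]; exists d.
- split.
  + by apply/set0Pn; exists b; apply: comp_self.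
  + exact: comp_connected.
  + by rewrite disjoint_subset; apply/subsetP => u /(comp_out bT).
  + move=> t /(subsetP TS1); rewrite inE => /andP [_ /existsP [d /andP [dD td]]].
    by exists d => //; apply: (subsetP (comp_mono b TS)).
- by rewrite disjoint_sym.
- by move=> u w; apply: comp_boundary.
Qed.

Lemma colorableP (G : sgraph) n :
  reflect (exists g : G -> 'I_n, forall u v, adj u v -> g u != g v) (colorable G n).
Proof.
apply: (iffP existsP) => [[f /forallP fP]|[g gP]].
  by exists f => u v uv; have /forallP/(_ v)/implyP := fP u; apply.
exists [ffun v => g v]; apply/forallP => u; apply/forallP => v.
by apply/implyP => uv; rewrite !ffunE gP.
Qed.

Lemma colorable_mono (G : sgraph) m n : m <= n -> colorable G m -> colorable G n.
Proof.
move=> mn /colorableP [g gP]; apply/colorableP; exists (fun v => widen_ord mn (g v)).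
by move=> u v /gP; apply: contra => /eqP [] /val_inj ->.
Qed.

Lemma chi_colorable (G : sgraph) : colorable G (chi G).
Proof. by rewrite /chi; case: ex_minnP. Qed.

Lemma chi_min (G : sgraph) n : colorable G n -> chi G <= n.
Proof. by rewrite /chi; case: ex_minnP => m _ h /h. Qed.

Lemma critical_minor_colorable k (G H : sgraph) :
  minor_critical k G -> minor H G -> ~ isomorphic H G -> colorable H k.-1.
Proof.
move=> [_ crit] HG nHG; apply: colorable_mono (chi_colorable H).
by have := crit H HG nHG; case: (k) => // n; rewrite ltnS.
Qed.

Lemma critical_not_colorable k (G : sgraph) (x : G) :
  minor_critical k G -> ~~ colorable G k.-1.
Proof.
move=> [chiG _]; apply/negP => /chi_min; rewrite chiG.
case: k chiG => [|n] chiG; last by rewrite ltnn.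
by have /colorableP [g _] := chi_colorable G; rewrite chiG in g; case: (g x).
Qed.

Definition proper_off (G : sgraph) n (D : {set G}) (g : G -> 'I_n) : Prop :=
  forall u v, u \notin D -> v \notin D -> adj u v -> g u != g v.

Lemma perm_of_pattern (T U : finType) (a b : U -> T) (S : {set U}) :
  {in S &, forall x y, (a x == a y) = (b x == b y)} ->
  exists p : {perm T}, {in S, forall x, p (a x) = b x}.
Proof.
suff seq_ext (s : seq U) : {in s &, forall x y, (a x == a y) = (b x == b y)} ->
    exists p : {perm T}, {in s, forall x, p (a x) = b x}.
  move=> ab; have [|p pS] := seq_ext (enum S).
    by move=> x y; rewrite !mem_enum; apply: ab.
  by exists p => x xS; rewrite pS ?mem_enum.
elim: s => [|x s IH] ab; first by exists 1%g.
have [|p pS] := IH; first by move=> y z ys zs; rewrite ab // inE (ys, zs) orbT.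
have abx y : y \in s -> (a y == a x) = (b y == b x) by move=> ys; rewrite ab ?inE ?ys ?eqxx ?orbT.
exists (p * tperm (p (a x)) (b x))%g => y; rewrite inE permM => /predU1P [->|ys].
  by rewrite tpermL.
rewrite (pS y ys); have [eqa|neqa] := eqVneq (a y) (a x).
  have /eqP eqb : b y == b x by rewrite -abx // eqa.
  by rewrite eqb tpermR -eqa (pS y ys) eqb.
have neqb : b y != b x by rewrite -abx.
rewrite tpermD //; last by rewrite eq_sym.
by rewrite -(pS y ys) (inj_eq perm_inj) eq_sym.
Qed.

(* Step 3: colourings of G - D1 and G - D2 inducing the same partition of
   T glue into a colouring of G when D1, D2 are disjoint, D2 misses T and
   the edges leaving D1 end in T: use the first colouring outside D1 and a
   recoloured second one on D1. *)
Lemma glue_colorings (G : sgraph) n (T D1 D2 : {set G}) (g1 g2 : G -> 'I_n) :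
  [disjoint D1 & D2] -> [disjoint D2 & T] ->
  (forall u w, u \in D1 -> w \notin D1 -> adj u w -> w \in T) ->
  proper_off D1 g1 -> proper_off D2 g2 ->
  {in T &, forall s s', (g2 s == g2 s') = (g1 s == g1 s')} -> colorable G n.
Proof.
move=> dD12 dD2T boundary g1P g2P same; have [p pT] := perm_of_pattern same.
have D1D2 u : u \in D1 -> u \notin D2 by move=> uD1; rewrite (disjointFr dD12 uD1).
have TD2 w : w \in T -> w \notin D2 by move=> wT; rewrite (disjointFl dD2T wT).
pose g v := if v \in D1 then p (g2 v) else g1 v.
have mixed u w : u \in D1 -> w \notin D1 -> adj u w -> g u != g w.
  move=> uD1 wD1 uw; have wT := boundary u w uD1 wD1 uw.
  rewrite /g uD1 (negbTE wD1) -(pT w wT) (inj_eq perm_inj).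
  exact: g2P (D1D2 u uD1) (TD2 w wT) uw.
apply/colorableP; exists g => u w uw.
have [uD1|uD1] := boolP (u \in D1); have [wD1|wD1] := boolP (w \in D1).
- by rewrite /g uD1 wD1 (inj_eq perm_inj); apply: g2P uw; apply: D1D2.
- exact: mixed.
- by rewrite eq_sym mixed // adj_sym.
- by rewrite /g (negbTE uD1) (negbTE wD1); apply: g1P.
Qed.

Lemma touch_sym (G : sgraph) (X Y : {set G}) : touch X Y = touch Y X.
Proof.
by apply/existsP/existsP => -[x /andP [xX /existsP [y /andP [yY xy]]]];
  exists y; rewrite yY /=; apply/existsP; exists x; rewrite xX adj_sym.
Qed.

Section Contraction.
Variables (G : sgraph) (W : {set G}) (phi : G -> {set G}).

Definition contract_adj : rel {x : G | x \in W} :=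
  fun u v => (u != v) && touch (phi (val u)) (phi (val v)).

Lemma contract_adj_sym : symmetric contract_adj.
Proof. by move=> u v; rewrite /contract_adj eq_sym touch_sym. Qed.

Lemma contract_adj_irr : irreflexive contract_adj.
Proof. by move=> u; rewrite /contract_adj eqxx. Qed.

Definition contraction : sgraph :=
  @SGraph {x : G | x \in W} contract_adj contract_adj_sym contract_adj_irr.

Lemma contraction_minor :
  (forall x, x \in W -> phi x != set0) ->
  (forall x, x \in W -> connected_in (phi x)) ->
  (forall x y, x \in W -> y \in W -> x != y -> [disjoint phi x & phi y]) ->
  minor contraction G.
Proof.
move=> nonempty conn disj; exists (fun h => phi (val h)); split.
- by move=> h; apply: nonempty (valP h).
- by move=> h; apply: conn (valP h).
- by move=> h h' hh'; apply: disj (valP h) (valP h') _; rewrite (inj_eq val_inj).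
move=> h h' /andP [_ /existsP [x /andP [xh /existsP [y /andP [yh' xy]]]]].
by exists x, y.
Qed.

Lemma contraction_proper : W != setT -> ~ isomorphic contraction G.
Proof.
move=> WT [f [bij_f _]]; have := bij_eq_card bij_f; rewrite card_sig.
have -> : #|[pred x in W]| = #|W| by apply: eq_card => x; rewrite inE.
have : #|W| < #|G| by rewrite -cardsT; apply: proper_card; rewrite properT.
by move=> lt e_card; rewrite e_card ltnn in lt.
Qed.

Lemma contraction_coloring n w0 :
  w0 \in W -> colorable contraction n ->
  exists f : G -> 'I_n,
    forall u v, u \in W -> v \in W -> u != v -> touch (phi u) (phi v) -> f u != f v.
Proof.
move=> w0W /colorableP [f fP]; exists (fun v => f (insubd (Sub w0 w0W) v)).
move=> u v uW vW uv touch_uv; apply: fP.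
by rewrite /= /contract_adj -(inj_eq val_inj) !insubdK ?uv.
Qed.

End Contraction.

(* The minor keeps every vertex outside D, except that all of Is is merged
   with D into the branch set of one representative i0 of Is. *)
Section SideColoring.
Variables (k : nat) (G : sgraph) (Cs Is D : {set G}) (x0 : G).
Hypotheses (crit : minor_critical k G) (side : full_side (Cs :|: Is) D).
Hypotheses (dCI : [disjoint Cs & Is])
  (clique : forall x y, x \in Cs -> y \in Cs -> x != y -> adj x y)
  (indep : forall x y, x \in Is -> y \in Is -> ~~ adj x y).
Hypothesis x0D : x0 \notin D.

(* The representative of Is (an arbitrary vertex off D when Is is empty). *)
Let i0 : G := odflt x0 [pick i in Is].

Lemma i0_out : i0 \notin D.
Proof.
have [_ _ dDCI _] := side; rewrite /i0; case: pickP => [i iI|_] //=.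
by rewrite (disjointFl dDCI) // inE iI orbT.
Qed.

Lemma i0_Is i : i \in Is -> i0 \in Is.
Proof. by rewrite /i0; case: pickP => [j jI|none] //=; rewrite none. Qed.

(* rep v is the vertex of the minor containing v, for v outside D. *)
Let rep (v : G) : G := if v \in Is then i0 else v.
Let W : {set G} := rep @: ~: D.
Let branch (w : G) : {set G} := if w \in Is then Is :|: D else [set w].

Lemma rep_eq u v : (rep u == rep v) = (u == v) || (u \in Is) && (v \in Is).
Proof.
rewrite /rep; have [uI|uI] := boolP (u \in Is); have [vI|vI] := boolP (v \in Is).
- by rewrite eqxx orbT.
- rewrite andbF orbF; apply/idP/idP => /eqP e_rep; move: vI.
    by rewrite -e_rep (i0_Is uI).
  by rewrite -e_rep uI.
- rewrite orbF; apply/idP/idP => /eqP e_rep; move: uI.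
    by rewrite e_rep (i0_Is vI).
  by rewrite e_rep vI.
- by rewrite orbF.
Qed.

Lemma rep_Is v : (rep v \in Is) = (v \in Is).
Proof. by rewrite /rep; case: ifP => // vI; rewrite (i0_Is vI). Qed.

Lemma W_out w : w \in W -> w \notin D.
Proof. by case/imsetP => v; rewrite inE /rep => vD ->; case: ifP => // _; apply: i0_out. Qed.

Lemma i0_W : i0 \in W.
Proof. by apply/imsetP; exists i0; rewrite ?inE ?i0_out // /rep; case: ifP. Qed.

Lemma W_Is w : w \in W -> w \in Is -> w = i0.
Proof. by case/imsetP => v _ ->; rewrite rep_Is /rep => ->. Qed.

Lemma W_proper : W != setT.
Proof.
have [/set0Pn [d dD] _ _ _] := side.
by apply: contraTneq dD => WT; apply: W_out; rewrite WT inE.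
Qed.

Lemma in_branch_rep v : v \notin D -> v \in branch (rep v).
Proof. by rewrite /branch rep_Is /rep; case: ifP => vI _; rewrite !inE ?vI. Qed.

Lemma branch_connected w : connected_in (branch w).
Proof.
rewrite /branch; case: ifP => _; last by move=> x y; rewrite !inE => /eqP -> /eqP ->.
have [_ Dconn _ att] := side; apply: connected_attach Dconn _ => x xI.
by apply: att; rewrite inE xI orbT.
Qed.

Lemma branch_disjoint w w' :
  w \in W -> w' \in W -> w != w' -> [disjoint branch w & branch w'].
Proof.
move=> wW w'W; rewrite /branch.
have [wI|wI] := boolP (w \in Is); have [w'I|w'I] := boolP (w' \in Is).
- by rewrite (W_Is wW wI) (W_Is w'W w'I) eqxx.
- by rewrite disjoint_sym disjoints1 !inE negb_or w'I W_out.
- by rewrite disjoints1 !inE negb_or wI W_out.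
- by rewrite disjoints1 inE eq_sym.
Qed.

(* Distinct vertices of T not both in Is give touching branch sets: a clique
   edge, or a neighbour in D of the vertex of Cs. *)
Lemma branch_touch s s' :
  s \in Cs :|: Is -> s' \in Cs -> s != s' -> touch (branch (rep s)) (branch (rep s')).
Proof.
have [_ _ _ att] := side.
move=> sCI s'C ss'; have s'I : s' \notin Is by rewrite (disjointFr dCI s'C).
rewrite /branch !rep_Is {2}/rep (negbTE s'I); apply/existsP.
have [sI|sI] := boolP (s \in Is).
  have [d dD s'd] : exists2 d, d \in D & adj s' d by apply: att; rewrite inE s'C.
  by exists d; rewrite !inE dD orbT /=; apply/existsP; exists s'; rewrite inE eqxx adj_sym.
have sC : s \in Cs by move: sCI; rewrite inE (negbTE sI) orbF.
exists s; rewrite /rep (negbTE sI) inE eqxx /=; apply/existsP; exists s'.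
by rewrite inE eqxx clique.
Qed.

Lemma side_coloring :
  exists g : G -> 'I_k.-1, proper_off D g /\
    {in Cs :|: Is &, forall s s', (g s == g s') = (s == s') || (s \in Is) && (s' \in Is)}.
Proof.
have [_ _ dDCI _] := side.
have CI_out s : s \in Cs :|: Is -> s \notin D by move=> sCI; rewrite (disjointFl dDCI sCI).
have minor_W : minor (contraction W branch) G.
  apply: contraction_minor => [w _|w _|]; last exact: branch_disjoint.
    by apply/set0Pn; exists w; rewrite /branch; case: ifP => wI; rewrite !inE ?wI.
  exact: branch_connected.
have [f fP] := contraction_coloring i0_W
  (critical_minor_colorable crit minor_W (contraction_proper W_proper)).
pose g v := f (rep v).
have g_neq u v : u \notin D -> v \notin D -> rep u != rep v ->
    touch (branch (rep u)) (branch (rep v)) -> g u != g v.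
  by move=> uD vD; apply: fP; apply/imsetP; [exists u | exists v]; rewrite ?inE.
exists g; split.
  move=> u v uD vD uv; apply: g_neq => //.
    rewrite rep_eq negb_or; apply/andP; split; first by apply: contraTneq uv => ->; rewrite adj_irr.
    by apply/negP => /andP [uI vI]; move: (indep uI vI); rewrite uv.
  apply/existsP; exists u; rewrite in_branch_rep //=.
  by apply/existsP; exists v; rewrite in_branch_rep.
move=> s s' sCI s'CI; rewrite -rep_eq.
have [e_rep|neq] := eqVneq (rep s) (rep s'); first by rewrite /g e_rep !eqxx.
have ss' : s != s' by apply: contraNneq neq => ->.
apply/negbTE/(g_neq _ _ (CI_out s sCI) (CI_out s' s'CI) neq).
case/setUP: (s'CI) => [s'C|s'I]; first exact: branch_touch.
have sC : s \in Cs.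
  by case/setUP: sCI => // sI; move: neq; rewrite rep_eq sI s'I orbT.
by rewrite touch_sym; apply: branch_touch; rewrite 1?eq_sym.
Qed.

End SideColoring.

Lemma split_restrict (G : sgraph) (S T : {set G}) :
  split_graph (induced S) -> T \subset S ->
  exists Cs Is : {set G},
    [/\ Cs :|: Is = T, [disjoint Cs & Is],
        forall x y, x \in Cs -> y \in Cs -> x != y -> adj x y &
        forall x y, x \in Is -> y \in Is -> ~~ adj x y].
Proof.
move=> [C [I [CI dCI clique indep]]] /subsetP TS.
exists (T :&: val @: C), (T :&: val @: I); split.
- rewrite -setIUr -imsetU CI; apply/setIidPl/subsetP => t tT.
  by apply/imsetP; exists (Sub t (TS t tT)).
- apply: disjointWl (subsetIr _ _) _; apply: disjointWr (subsetIr _ _) _.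
  by rewrite imset_disjoint //; apply: val_inj.
- move=> _ _ /setIP [_ /imsetP [x xC ->]] /setIP [_ /imsetP [y yC ->]] xy.
  by apply: clique => //; apply: contraNneq xy => ->.
- by move=> _ _ /setIP [_ /imsetP [x xI ->]] /setIP [_ /imsetP [y yI ->]]; apply: indep.
Qed.

Theorem mainTheorem12 (k : nat) (G : sgraph) (A B : {set G}) :
  minor_critical k G -> separation A B -> ~ split_graph (induced (A :&: B)).
Proof.
move=> crit sep splitS.
have [T [D1 [D2 [TS side1 side2 dD12 boundary]]]] := separation_full_sides sep.
have [Cs [Is [CIT dCI clique indep]]] := split_restrict splitS TS.
rewrite -CIT in side1 side2 boundary.
have [/set0Pn [x1 x1D1] _ _ _] := side1.
have [/set0Pn [x2 x2D2] _ dD2T _] := side2.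
have x1D2 : x1 \notin D2 by rewrite (disjointFr dD12 x1D1).
have x2D1 : x2 \notin D1 by rewrite (disjointFl dD12 x2D2).
have [g1 [g1P g1T]] := side_coloring crit side1 dCI clique indep x2D1.
have [g2 [g2P g2T]] := side_coloring crit side2 dCI clique indep x1D2.
case/negP: (critical_not_colorable x1 crit).
apply: glue_colorings dD12 dD2T boundary g1P g2P _ => s s' sT s'T.
by rewrite g1T ?g2T.
Qed.
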